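(* Let $\beta>0$ and $0<c<1$. For every $\mathrm{v}\in\mathbb{Z}_{\geq 0}$ and every $x\in\mathbb{Z}_{\geq 0}$, $$\check{\xi}_{\mathrm{v}}(x;\beta,c)\;=\;{}_2F_1\Bigl(\genfrac{}{}{0pt}{}{-\mathrm{v},\,-x}{\beta}\Bigm|1-c\Bigr)\;=\;\sum_{k=0}^{\min(\mathrm{v},x)}\frac{(-\mathrm{v})_k(-x)_k}{(\beta)_k\,k!}(1-c)^k\;>\;0 .$$
   Context: $(a)_k=a(a+1)\cdots(a+k-1)$ is the Pochhammer symbol, $(a)_0=1$. The function $\check{\xi}_{\mathrm{v}}$ is the Meixner polynomial $M_{\mathrm{v}}(x;\beta,c^{-1})={}_2F_1(-\mathrm{v},-x;\beta;1-c)$ with the parameter $c$ replaced by $c^{-1}$ (the ''virtual state polynomial'' of the Meixner system). *)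

From mathcomp Require Import all_boot all_order all_algebra.
Set Implicit Arguments. Unset Strict Implicit. Unset Printing Implicit Defensive.
Import Order.TTheory GRing.Theory Num.Theory.
Local Open Scope ring_scope.

Definition poch {R : ringType} (a : R) (k : nat) : R :=
  \prod_(i < k) (a + i%:R).

Definition hyp2F1_term {R : fieldType} (n : nat) (b g z : R) : R :=
  \sum_(0 <= k < n.+1)
     poch (- n%:R) k * poch b k / (poch g k * (k`!)%:R) * z ^+ k.

Definition meixner {R : fieldType} (n : nat) (x beta c : R) : R :=
  hyp2F1_term n (- x) beta (1 - c^-1).

Definition xi_check {R : fieldType} (v : nat) (x beta c : R) : R :=
  meixner v x beta c^-1.

(** At a negative integer [-m] the Pochhammer symbol is [(-1)^k m^_k], which
    vanishes for [k > m]; hence the series with two negative integer numerator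
    parameters [-v] and [-x] stops at [min(v, x)]. The signs of the two
    numerator symbols cancel, so once [beta > 0] and [0 < 1 - c] every
    surviving term is positive, the [k = 0] term being [1]. *)
From mathcomp Require Import all_boot all_order all_algebra.
From mathcomp Require Import zify.
Import Order.TTheory GRing.Theory Num.Theory.
Local Open Scope ring_scope.

Lemma poch0 (R : nzRingType) (a : R) : poch a 0 = 1.
Proof. by rewrite /poch big_ord0. Qed.

Lemma pochS (R : nzRingType) (a : R) (k : nat) :
  poch a k.+1 = poch a k * (a + k%:R).
Proof. by rewrite /poch big_ord_recr. Qed.

Lemma poch_neg_nat (R : nzRingType) (n k : nat) :
  poch (- (n%:R : R)) k = (-1) ^+ k * (n ^_ k)%:R.
Proof.
elim: k => [|k IH]; first by rewrite poch0 expr0 mul1r ffactn0.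
rewrite pochS IH ffactnSr.
have [le_kn|lt_nk] := leqP k n; last by rewrite ffact_small // mul0n !mulr0 mul0r.
by rewrite natrM natrB // exprS mulN1r mulNr -!mulrA -mulrN -mulrN opprB addrC.
Qed.

Lemma poch_neg_nat_eq0 (R : nzRingType) (n k : nat) :
  (n < k)%N -> poch (- (n%:R : R)) k = 0.
Proof. by move=> lt_nk; rewrite poch_neg_nat ffact_small // mulr0. Qed.

Lemma poch_gt0 (R : numDomainType) (a : R) (k : nat) : 0 < a -> 0 < poch a k.
Proof. by move=> a_gt0; apply: prodr_gt0 => i _; rewrite ltr_wpDr ?ler0n. Qed.

Lemma poch_neg_nat_mul_gt0 (R : numDomainType) (m n k : nat) :
  (k <= minn m n)%N -> 0 < poch (- (m%:R : R)) k * poch (- n%:R) k.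
Proof.
move=> le_k_mn; rewrite !poch_neg_nat mulrACA -exprMn mulrNN mul1r expr1n mul1r.
by rewrite -natrM ltr0n muln_gt0 !ffact_gt0; apply/andP; split; lia.
Qed.

Lemma hyp2F1_term_neg_nat (R : fieldType) (n m : nat) (g z : R) :
  hyp2F1_term n (- m%:R) g z =
    \sum_(0 <= k < (minn n m).+1)
      poch (- n%:R) k * poch (- m%:R) k / (poch g k * (k`!)%:R) * z ^+ k.
Proof.
rewrite /hyp2F1_term (big_cat_nat _ (n := (minn n m).+1)) //=; last by lia.
rewrite -[RHS]addr0; congr (_ + _).
rewrite big_nat_cond big1 // => k /andP[/andP[lt_mn_k lt_k_n] _].
by rewrite (poch_neg_nat_eq0 _ m) ?mulr0 ?mul0r //; lia.
Qed.

Lemma hyp2F1_neg_nat_sum_gt0 (R : numFieldType) (n m : nat) (g z : R) :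
  0 < g -> 0 < z ->
  0 < \sum_(0 <= k < (minn n m).+1)
        poch (- n%:R) k * poch (- m%:R) k / (poch g k * (k`!)%:R) * z ^+ k.
Proof.
move=> g_gt0 z_gt0; rewrite big_nat_recl // big_nat_cond.
rewrite !poch0 expr0 !mul1r mulr1 invr1.
apply: ltr_pwDl => //; apply: sumr_ge0 => k /andP[/andP[_ lt_k_mn] _].
apply/ltW/mulr_gt0; last exact: exprn_gt0.
apply: mulr_gt0; first exact: poch_neg_nat_mul_gt0.
by rewrite invr_gt0 mulr_gt0 ?poch_gt0 // ltr0n fact_gt0.
Qed.

Lemma xi_check_hyp2F1 (R : fieldType) (v : nat) (x beta c : R) :
  xi_check v x beta c = hyp2F1_term v (- x) beta (1 - c).
Proof. by rewrite /xi_check /meixner invrK. Qed.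

Theorem mainTheorem1 (R : realFieldType) (beta c : R)
    (hbeta : 0 < beta) (hc0 : 0 < c) (hc1 : c < 1) (v x : nat) :
  xi_check v x%:R beta c =
    \sum_(0 <= k < (minn v x).+1)
      poch (- v%:R) k * poch (- x%:R) k / (poch beta k * (k`!)%:R) * (1 - c) ^+ k
  /\
  0 < \sum_(0 <= k < (minn v x).+1)
      poch (- v%:R) k * poch (- x%:R) k / (poch beta k * (k`!)%:R) * (1 - c) ^+ k.
Proof.
rewrite xi_check_hyp2F1 hyp2F1_term_neg_nat; split => //.
by apply: hyp2F1_neg_nat_sum_gt0; rewrite ?subr_gt0.
Qed.
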